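(* For every positive integer $t$ and every $c\in(0,1)$ there exists $\delta=\delta(t,c)\in(0,1)$ such that for all $n>c\delta^{-1}$ the following holds. Let $V$ be a set of $n$ vertices and let $G_R$ and $G_B$ be graphs on vertex set $V$. If $G_R$ has at most $\delta n^2$ edges and $G_B$ has at least $cn^2$ edges, then there exists a set $S\subseteq V$ with $|S|\geq t$ such that $G_B[S]$ has at least $\frac{c}{2}|S|^2$ edges and $G_R[S]$ has no edges. *)

From mathcomp Require Import all_boot all_order all_algebra.
From mathcomp Require Import all_classical all_reals.
Set Implicit Arguments. Unset Strict Implicit. Unset Printing Implicit Defensive.

Definition simple_graph (V : finType) (E : rel V) : Prop :=
  (forall x y, E x y = E y x) /\ (forall x, ~~ E x x).

Definition induced_edges (V : finType) (E : rel V) (S : {set V}) : {set {set V}} :=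
  [set e : {set V} | (e \subset S) &&
     [exists x, exists y, (x != y) && (e == [set x; y]) && E x y]].

Definition n_edges_in (V : finType) (E : rel V) (S : {set V}) : nat :=
  #|induced_edges E S|.

Definition n_edges (V : finType) (E : rel V) : nat := n_edges_in E [set: V].

(* Take k = t + 2 >= 3 and delta = c / (4 k^2), and weigh each k-subset S by
   e_B(S) - k^2 e_R(S).  A random k-subset contains each pair with probability
   k(k-1) / (n(n-1)), so the average weight is at least
   k(k-1)/(n(n-1)) (c n^2 - c n^2 / 4) >= (3/4) c k(k-1) >= (c/2) k^2.  A k-subset
   of at least average weight cannot contain an e_R-edge, since e_B(S) <= k^2:
   it is the required S. *)

From mathcomp Require Import all_boot all_order all_algebra.
From mathcomp Require Import all_classical all_reals.
From mathcomp Require Import zify ring lra.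
Import Order.TTheory GRing.Theory Num.Theory.

Set Implicit Arguments.
Unset Strict Implicit.
Unset Printing Implicit Defensive.

Lemma card_set_and (T : finType) (P Q : pred T) :
  #|[set x | P x & Q x]| = \sum_(x | P x) Q x.
Proof.
rewrite -sum1_card (eq_bigl (fun x => P x && Q x)) => [|x]; last by rewrite inE.
by rewrite big_mkcondr; apply: eq_bigr => x _; case: (Q x).
Qed.

Section EdgeCounting.
Variables (V : finType) (E : rel V).

Lemma card_supersets_of_pair m (e : {set V}) : #|e| = 2 ->
  #|[set S : {set V} | #|S| == m.+2 & e \subset S]| = 'C(#|V| - 2, m).
Proof.
move=> e2; have e_V : #|e| <= #|V| by rewrite max_card.
have [mV|Vm] := leqP m.+2 #|V|; last first.
  rewrite bin_small; last by lia.
  apply/eqP; rewrite cards_eq0; apply/eqP/setP => S; rewrite !inE.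
  by apply/negbTE/andP => -[/eqP cS _]; have := max_card S; lia.
rewrite -bin_sub; last by lia.
have eC : #|~: e| = #|V| - 2 by have := cardsC e; lia.
rewrite -eC -cards_draws -(card_preimset _ (@finset.setC_inj V)).
apply: eq_card => S; rewrite !inE finset.subsetC.
have SV := max_card S; have SC := cardsC S.
by rewrite andbC; congr (_ && _); apply/eqP/eqP; lia.
Qed.

Lemma induced_edges_subset S :
  induced_edges E S = [set e in induced_edges E [set: V] | e \subset S].
Proof. by apply/setP => e; rewrite !inE finset.subsetT andbC. Qed.

Lemma card_edge e : e \in induced_edges E [set: V] -> #|e| = 2.
Proof.
by rewrite inE => /andP[_ /existsP[x /existsP[y /andP[/andP[xy /eqP ->] _]]]]; rewrite cards2 xy.
Qed.

Lemma sum_n_edges_in m :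
  \sum_(S : {set V} | #|S| == m.+2) n_edges_in E S = n_edges E * 'C(#|V| - 2, m).
Proof.
rewrite /n_edges /n_edges_in; under eq_bigr => S _ do
  rewrite induced_edges_subset card_set_and.
rewrite exchange_big /= -sum_nat_const; apply: eq_bigr => e /card_edge e2.
by rewrite -(card_supersets_of_pair m e2) card_set_and.
Qed.

Lemma n_edges_in_le_sq S : n_edges_in E S <= #|S| ^ 2.
Proof.
apply: (@leq_trans #|[set e : {set V} | e \subset S & #|e| == 2]|).
  apply: subset_leq_card; apply/fintype.subsetP => e; rewrite !inE => /andP[-> /existsP[x]].
  by case/existsP => y /andP[/andP[xy /eqP ->] _]; rewrite cards2 xy.
by rewrite cards_draws bin2 -divn2 (leq_trans (leq_div _ _)) // leq_mul ?leq_pred.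
Qed.

Lemma sum_n_edges_in_mul k : (1 < k)%N ->
  (\sum_(S : {set V} | #|S| == k) n_edges_in E S) * (#|V| * (#|V| - 1))
  = n_edges E * ('C(#|V|, k) * (k * (k - 1))).
Proof.
case: k => [|[|m]] // _; rewrite sum_n_edges_in -mulnA; congr (_ * _).
rewrite subn2 !subn1 (mulnC #|V|) mulnA (mulnC _ #|V|.-1) mul_bin_diag.
by rewrite -mulnA (mulnC _ #|V|) mul_bin_diag mulnC (mulnC m.+2) mulnA.
Qed.

End EdgeCounting.

Local Open Scope ring_scope.

Lemma exists_ge_mean (R : realDomainType) (T : finType) (P : pred T)
    (f : T -> R) (a : R) :
  (0 < #|P|)%N -> #|P|%:R * a <= \sum_(x | P x) f x -> exists2 x, P x & a <= f x.
Proof.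
move=> /card_gt0P[x0 x0A] le_sum.
case: (pickP [pred x | P x & a <= f x]) => [x /andP[]|none]; first by exists x.
have: \sum_(x | P x) f x < \sum_(x | P x) a.
  apply: ltr_sum => [|x xA]; first by apply/hasP; exists x0; rewrite ?mem_index_enum.
  by have := none x; rewrite /= xA /= => /negbT; rewrite -ltNge.
by rewrite sumr_const -mulr_natl ltNge le_sum.
Qed.

Section PenalizedEdgeCount.
Variables (R : realFieldType) (V : finType) (ER EB : rel V).

Definition penalized_edges (S : {set V}) : R :=
  (n_edges_in EB S)%:R - #|S|%:R ^+ 2 * (n_edges_in ER S)%:R.

Lemma n_edges_in_ER_eq0 S : 0 < penalized_edges S -> n_edges_in ER S = 0%N.
Proof.
rewrite /penalized_edges; case: (n_edges_in ER S) => [//|r] pos; exfalso.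
have := n_edges_in_le_sq EB S; rewrite -(ler_nat R) natrX => EB_le.
have ER_ge1 : 1 <= r.+1%:R :> R by rewrite ler1n.
have sq_ge0 : 0 <= #|S|%:R ^+ 2 :> R by rewrite exprn_ge0.
nra.
Qed.

Lemma sum_penalized_edges_ge (c : R) k : (3 <= k <= #|V|)%N -> 0 < c ->
  (n_edges ER)%:R <= c / (4 * k%:R ^+ 2) * #|V|%:R ^+ 2 ->
  c * #|V|%:R ^+ 2 <= (n_edges EB)%:R ->
  'C(#|V|, k)%:R * (c / 2 * k%:R ^+ 2)
    <= \sum_(S : {set V} | #|S| == k) penalized_edges S.
Proof.
move=> /andP[k3 kn] c0 hR hB.
have sum_avg E : (\sum_(S : {set V} | #|S| == k) (n_edges_in E S)%:R)
      * (#|V|%:R * (#|V|%:R - 1))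
    = 'C(#|V|, k)%:R * (k%:R * (k%:R - 1)) * (n_edges E)%:R :> R.
  have := congr1 (fun x => x%:R : R) (sum_n_edges_in_mul E (ltnW k3)).
  have [k1 V1] : (1 <= k)%N /\ (1 <= #|V|)%N by lia.
  by rewrite /= !natrM natr_sum !natrB ?mulr1n // => ->; rewrite mulrC.
have sumE : \sum_(S : {set V} | #|S| == k) penalized_edges S =
    \sum_(S : {set V} | #|S| == k) (n_edges_in EB S)%:R
    - k%:R ^+ 2 * \sum_(S : {set V} | #|S| == k) (n_edges_in ER S)%:R.
  by rewrite mulr_sumr -sumrB; apply: eq_bigr => S /eqP cS; rewrite /penalized_edges cS.
set nR : R := #|V|%:R in hR hB sum_avg *; set kR : R := k%:R in hR sum_avg sumE *.
have k3R : 3 <= kR by rewrite (ler_nat R 3).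
have knR : kR <= nR by rewrite ler_nat.
have pair_ratio : 2 * kR * (nR - 1) <= 3 * (kR - 1) * nR by nra.
have ckn_ge0 : 0 <= c * kR * nR by rewrite !mulr_ge0 ?ler0n ?ltW.
have penalty_le : kR ^+ 2 * (n_edges ER)%:R <= c / 4 * nR ^+ 2.
  have -> : c / 4 * nR ^+ 2 = kR ^+ 2 * (c / (4 * kR ^+ 2) * nR ^+ 2).
    by field; rewrite gt_eqF // (lt_le_trans _ k3R).
  by rewrite ler_wpM2l ?exprn_ge0 ?ler0n.
have P_gt0 : 0 < nR * (nR - 1) by nra.
rewrite -(ler_pM2r P_gt0) sumE mulrBl sum_avg -(mulrA (kR ^+ 2)) sum_avg.
have kk_ge0 : 0 <= kR * (kR - 1) by nra.
have gap_ge : kR * (kR - 1) * (3 / 4 * c * nR ^+ 2)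
    <= kR * (kR - 1) * ((n_edges EB)%:R - kR ^+ 2 * (n_edges ER)%:R).
  by rewrite ler_wpM2l //; lra.
have target_le : c / 2 * kR ^+ 2 * (nR * (nR - 1))
    <= kR * (kR - 1) * (3 / 4 * c * nR ^+ 2) by nra.
have C_ge0 : 0 <= 'C(#|V|, k)%:R :> R := ler0n _ _.
nra.
Qed.

End PenalizedEdgeCount.

Theorem lemma4p6 (R : realType) (t : nat) (c : R) :
  (0 < t)%N -> 0 < c < 1 ->
  exists delta : R, 0 < delta < 1 /\
    forall (V : finType) (ER EB : rel V),
      c / delta < (#|V|)%:R ->
      simple_graph ER -> simple_graph EB ->
      (n_edges ER)%:R <= delta * (#|V|)%:R ^+ 2 ->
      c * (#|V|)%:R ^+ 2 <= (n_edges EB)%:R ->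
      exists S : {set V},
        [/\ (t <= #|S|)%N,
            c / 2 * (#|S|)%:R ^+ 2 <= (n_edges_in EB S)%:R
          & n_edges_in ER S = 0%N].
Proof.
move=> t_gt0 /andP[c_gt0 c_lt1]; set k := t.+2.
have k_ge3 : 3 <= k%:R :> R by rewrite (ler_nat R 3) /k; lia.
exists (c / (4 * k%:R ^+ 2)); split.
  by rewrite divr_gt0 ?ltr_pdivrMr ?mulr_gt0 ?mul1r //=; nra.
move=> V ER EB V_gt _ _ ER_small EB_large.
have kV : (3 <= k <= #|V|)%N.
  rewrite !ltnS t_gt0 -(ler_nat R); apply/ltW/(le_lt_trans _ V_gt).
  by rewrite invf_div mulrCA divff ?gt_eqF // mulr1; nra.
have sum_ge := sum_penalized_edges_ge kV c_gt0 ER_small EB_large.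
have card_k : #|[pred S : {set V} | #|S| == k]| = 'C(#|V|, k).
  by rewrite -cardsE card_draws.
rewrite -card_k in sum_ge; have [|S /eqP S_k S_pos] := exists_ge_mean _ sum_ge.
  by rewrite card_k bin_gt0; case/andP: kV.
have ER_S : n_edges_in ER S = 0%N.
  apply: n_edges_in_ER_eq0 (lt_le_trans _ S_pos).
  by rewrite !mulr_gt0 ?invr_gt0 ?exprn_gt0 // (lt_le_trans _ k_ge3).
exists S; split => //; first by rewrite S_k /k; lia.
by move: S_pos; rewrite /penalized_edges ER_S mulr0 subr0 S_k.
Qed.
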